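(* Let $d\in\mathbb{N}$. Then $$\mathrm{WA} = \pi(\Pi) \qquad\text{and hence}\qquad \mathrm{Bad} = \mathbb{R}^d\setminus \pi(\Pi).$$
   Context: For $z\in\mathbb{R}^d$, $\|z\|$ denotes the sup-norm distance from $z$ to $\mathbb{Z}^d$. Write $\mathbb{N}=\{1,2,3,\dots\}$. $\mathrm{Bad}=\{x\in\mathbb{R}^d : \inf_{n\in\mathbb{N}} n\|nx\|^d>0\}$ is the set of badly approximable vectors, and $\mathrm{WA}=\mathbb{R}^d\setminus\mathrm{Bad}$. For $\psi:\mathbb{N}\to\mathbb{R}_{\ge 0}$, let $W(\psi)$ be the set of pairs $(x,y)\in\mathbb{R}^d\times\mathbb{R}^d$ for which $\|nx+y\|<\psi(n)$ holds for infinitely many $n\in\mathbb{N}$. $\mathcal{D}$ is the set of all non-increasing $\psi:\mathbb{N}\to\mathbb{R}_{\ge0}$ such that $\sum_n\psi(n)^d$ diverges, and $\Pi=\bigcap_{\psi\in\mathcal{D}}W(\psi)$. $\pi:\mathbb{R}^d\times\mathbb{R}^d\to\mathbb{R}^d$ is the projection $\pi(x,y)=x$. *)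

From HB Require Import structures.
From mathcomp Require Import all_boot all_order all_algebra.
From mathcomp Require Import all_classical all_reals.
Set Implicit Arguments. Unset Strict Implicit. Unset Printing Implicit Defensive.
Import Order.TTheory GRing.Theory Num.Theory.
Local Open Scope ring_scope.
Local Open Scope classical_set_scope.

Definition distZ (R : realType) (t : R) : R :=
  Num.min (t - (Num.floor t)%:~R) ((Num.floor t)%:~R + 1 - t).

Definition distZd (R : realType) (d : nat) (z : 'I_d -> R) : R :=
  \big[Num.max/0]_(i < d) distZ (z i).

Definition nscale (R : realType) (d : nat) (n : nat) (x : 'I_d -> R) : 'I_d -> R :=
  fun i => n%:R * x i.

Definition Bad (R : realType) (d : nat) : set ('I_d -> R) :=
  [set x | exists c : R, 0 < c /\
     forall n : nat, (0 < n)%N -> c <= n%:R * (distZd (nscale n x)) ^+ d].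

Definition WA (R : realType) (d : nat) : set ('I_d -> R) := ~` @Bad R d.

Definition W (R : realType) (d : nat) (psi : nat -> R) :
    set (('I_d -> R) * ('I_d -> R)) :=
  [set p | forall N : nat, exists n : nat, (N < n)%N /\
     distZd (fun i => n%:R * p.1 i + p.2 i) < psi n].

(* D: non-increasing psi : N -> R_{>=0} with sum_n psi(n)^d divergent.
   psi is a function on nat whose value at 0 is irrelevant (N = {1,2,...}). *)
Definition Dset (R : realType) (d : nat) : set (nat -> R) :=
  [set psi | (forall n : nat, (0 < n)%N -> 0 <= psi n)
     /\ (forall m n : nat, (0 < m)%N -> (m <= n)%N -> psi n <= psi m)
     /\ (forall M : R, exists N : nat, M < \sum_(1 <= k < N) (psi k) ^+ d)].

Definition PiSet (R : realType) (d : nat) : set (('I_d -> R) * ('I_d -> R)) :=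
  [set p | forall psi, @Dset R d psi -> @W R d psi p].

Definition piPi (R : realType) (d : nat) : set ('I_d -> R) :=
  fst @` @PiSet R d.

From mathcomp Require Import all_boot all_order all_algebra.
From mathcomp Require Import all_classical all_reals.
From mathcomp Require Import ring lra zify.
Import Order.TTheory GRing.Theory Num.Theory.
Local Open Scope ring_scope.
Local Open Scope classical_set_scope.
Set Implicit Arguments. Unset Strict Implicit. Unset Printing Implicit Defensive.

(* If x is badly approximable with constant c, then for any y the distances
   r n = ||n x + y|| are separated, c <= (b - a) (r a + r b)^d for a < b, since
   (b - a) x = (b x + y) - (a x + y).  The running minimum psi of r (started after
   the at most one zero of r) is non-increasing and never exceeded by r, and every
   drop of psi from a record r a to the next record r b < r a costs at least
   c / 2^d in sum psi^d; so psi belongs to the class D while (x, y) is not in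
   W(psi).
   Conversely, if x is not badly approximable, pick q_0, q_1, ... with
   ||q_(k+1) x|| <= ||q_k x|| / 2 and (q_0 + ... + q_(k+1)) (2 ||q_(k+1) x||)^d
   <= 2^-k, and let y be minus the sum of the offsets of the q_k x from their
   nearest lattice points.  Then n_k = q_0 + ... + q_k has ||n_k x + y|| <=
   2 ||q_(k+1) x||, so any psi with psi n <= ||n x + y|| for large n has
   sum psi^d <= 2^-k over each block [n_k, n_(k+1)), and psi is not in D. *)

Lemma exists_natmul_gt (R : realType) (M e : R) : 0 < e -> exists k : nat, M < k%:R * e.
Proof.
move=> e_gt0; exists (Num.Def.archi_bound (`|M| / e)).
have := archi_boundP (divr_ge0 (normr_ge0 M) (ltW e_gt0)).
by rewrite ltr_pdivrMr //; apply: le_lt_trans (ler_norm M).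
Qed.

Section DistanceToIntegers.
Variable R : realType.
Implicit Types t u v : R.

Definition nearest_int t : int :=
  if t - (Num.floor t)%:~R <= (Num.floor t)%:~R + 1 - t then Num.floor t
  else Num.floor t + 1.

Lemma distZE t : distZ t = `|t - (nearest_int t)%:~R|.
Proof.
have := floor_le t; have := floorD1_gt t; rewrite intrD => h1 h2.
rewrite /distZ /nearest_int; case: ifP => hm.
  by rewrite (min_idPl hm) ger0_norm //; lra.
move/negbT: hm; rewrite -ltNge => hm.
by rewrite (min_idPr (ltW hm)) intrD distrC ger0_norm //; lra.
Qed.

Lemma distZ_ge0 t : 0 <= distZ t.
Proof. by rewrite distZE. Qed.

Lemma distZ_le_dist t (z : int) : distZ t <= `|t - z%:~R|.
Proof.
rewrite /distZ; have := floor_le t; have := floorD1_gt t; rewrite intrD => h1 h2.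
have [zt|tz] := lerP z (Num.floor t).
  have : (z%:~R : R) <= (Num.floor t)%:~R by rewrite ler_int.
  by rewrite ge_min => hz; apply/orP; left; apply: le_trans (ler_norm _); lra.
have : ((Num.floor t + 1)%:~R : R) <= z%:~R by rewrite ler_int; lia.
rewrite intrD ge_min distrC => hz; apply/orP; right.
by apply: le_trans (ler_norm _); lra.
Qed.

Lemma distZB_le u v : distZ (u - v) <= distZ u + distZ v.
Proof.
rewrite (distZE u) (distZE v).
apply: le_trans (distZ_le_dist _ (nearest_int u - nearest_int v)) _.
rewrite intrB (_ : u - v - _ = (u - (nearest_int u)%:~R) - (v - (nearest_int v)%:~R)).
  exact: ler_normB.
by ring.
Qed.

End DistanceToIntegers.

Section DistanceToLattice.
Variables (R : realType) (d : nat).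
Implicit Types (x y z : 'I_d -> R).

Lemma distZd_ge0 z : 0 <= distZd z.
Proof.
by rewrite /distZd; elim/big_ind: _ => // [a b ha hb|i _]; rewrite ?le_max ?ha ?distZ_ge0.
Qed.

Lemma distZ_le_distZd z i : distZ (z i) <= distZd z.
Proof. exact: (le_bigmax 0 (fun i => distZ (z i))). Qed.

Lemma distZd_le z (B : R) : 0 <= B -> (forall i, distZ (z i) <= B) -> distZd z <= B.
Proof. by move=> B_ge0 zB; apply: bigmax_le => // i _. Qed.

Lemma distZd_nscale_subn x y (a b : nat) : (a <= b)%N ->
  distZd (nscale (b - a) x) <=
  distZd (fun i => a%:R * x i + y i) + distZd (fun i => b%:R * x i + y i).
Proof.
rewrite addrC => ab; apply: distZd_le => [|i]; first by rewrite addr_ge0 ?distZd_ge0.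
rewrite /nscale natrB // (_ : _ * x i = (b%:R * x i + y i) - (a%:R * x i + y i)).
  apply: le_trans (distZB_le _ _) _.
  by apply: lerD; apply: (distZ_le_distZd (fun i => _)).
by ring.
Qed.

End DistanceToLattice.

Definition separated (R : realType) (c : R) (d : nat) (u : nat -> R) :=
  forall a b : nat, (a < b)%N -> c <= (b - a)%:R * (u a + u b) ^+ d.

Lemma Bad_separated (R : realType) (d : nat) (x y : 'I_d -> R) : Bad x ->
  exists2 c, 0 < c & separated c d (fun n => distZd (fun i => n%:R * x i + y i)).
Proof.
move=> [c [c_gt0 hc]]; exists c => // a b ab.
apply: le_trans (hc (b - a)%N _) _; first by rewrite subn_gt0.
apply: ler_wpM2l => //; apply: lerXn2r; rewrite ?nnegrE ?addr_ge0 ?distZd_ge0 //.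
exact: distZd_nscale_subn (ltnW ab).
Qed.

Lemma separated_eventually_gt0 (R : realType) (c : R) (d : nat) (u : nat -> R) :
  0 < c -> (0 < d)%N -> (forall n, 0 <= u n) -> separated c d u ->
  exists n0, forall m, (n0 <= m)%N -> 0 < u m.
Proof.
move=> c_gt0 d_gt0 u_ge0 sep_u.
have [[m um0]|no_zero] := pselect (exists m, u m = 0); last first.
  by exists 0%N => m _; rewrite lt_def u_ge0 andbT; apply/eqP => um0; apply: no_zero; exists m.
exists m.+1 => j mj; rewrite lt_def u_ge0 andbT; apply/eqP => uj0.
by have := sep_u m j mj; rewrite um0 uj0 addr0 expr0n gtn_eqF // mulr0 leNgt c_gt0.
Qed.

Lemma separated_maxn_drop (R : realType) (c : R) (d : nat) (u : nat -> R) n0 :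
  (forall n, 0 <= u n) -> separated c d u ->
  forall a b, (a < b)%N -> u (maxn n0 b) < u (maxn n0 a) ->
  c <= (b - a)%:R * (u (maxn n0 a) + u (maxn n0 b)) ^+ d.
Proof.
move=> u_ge0 sep_u a b ab uba; have n0b : (n0 < b)%N.
  by rewrite ltnNge; apply/negP => bn0; move: uba; rewrite !(maxn_idPl _) ?ltxx //; lia.
have := sep_u (maxn n0 a) b; rewrite gtn_max n0b ab (maxn_idPr (ltnW n0b)) => /(_ isT).
move/le_trans; apply; apply: ler_wpM2r; first by rewrite exprn_ge0 // addr_ge0.
by rewrite ler_nat; lia.
Qed.

Section RunningMin.
Variables (R : realType) (u : nat -> R).

Fixpoint running_min n : R :=
  if n is k.+1 then Num.min (running_min k) (u k.+1) else u 0.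

Lemma running_min_le n : running_min n <= u n.
Proof. by case: n => [|n] //=; rewrite ge_min lexx orbT. Qed.

Lemma running_min_nonincr : {homo running_min : m n / (m <= n)%N >-> n <= m}.
Proof.
apply: homo_leq => [//|y x z xy yz|n]; first exact: le_trans yz xy.
by rewrite /= ge_min lexx.
Qed.

Lemma running_min_gt0 : (forall m, 0 < u m) -> forall n, 0 < running_min n.
Proof. by move=> u_gt0; elim=> [|n IH] //=; rewrite lt_min IH u_gt0. Qed.

Lemma running_min_const a b : (forall m, (a < m < b)%N -> running_min a <= u m) ->
  forall j, (a <= j < b)%N -> running_min j = running_min a.
Proof.
move=> ua; elim=> [|j IH] /andP[aj jb]; first by move: aj; rewrite leqn0 => /eqP->.
move: aj; rewrite leq_eqVlt => /orP[/eqP-> //|]; rewrite ltnS => aj /=.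
rewrite IH; last by rewrite aj ltnW.
by apply/min_idPl/ua; rewrite ltnS aj jb.
Qed.

End RunningMin.

Section RunningMinPowSum.
Variables (R : realType) (d : nat) (c : R) (u : nat -> R).
Hypotheses (c_gt0 : 0 < c) (u_gt0 : forall m, 0 < u m).
Hypothesis drop_separated :
  forall a b : nat, (a < b)%N -> u b < u a -> c <= (b - a)%:R * (u a + u b) ^+ d.

Local Notation psi := (running_min u).
Local Notation S N := (\sum_(0 <= j < N) psi j ^+ d).

Lemma running_min_sum_const a b : (a <= b)%N ->
  (forall j, (a <= j < b)%N -> psi j = psi a) -> S b = S a + (b - a)%:R * psi a ^+ d.
Proof.
move=> ab psi_const; rewrite (@big_cat_nat _ _ _ a 0 b _ _ (leq0n a) ab) /=; congr (_ + _).
transitivity (\sum_(a <= j < b) psi a ^+ d); first by apply: eq_big_nat => j /psi_const ->.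
by rewrite sumr_const_nat mulr_natl.
Qed.

Lemma running_min_sum_ge0 N : 0 <= S N.
Proof. by apply: sumr_ge0 => j _; rewrite exprn_ge0 // ltW // running_min_gt0. Qed.

Lemma running_min_eventually_const_sum_unbounded a :
  (forall m, (a < m)%N -> psi a <= u m) -> forall M, exists N, M < S N.
Proof.
move=> ua M; have [k Mk] := exists_natmul_gt M (exprn_gt0 d (running_min_gt0 u_gt0 a)).
exists (a + k)%N; rewrite (running_min_sum_const (leq_addr k a)) ?addKn.
  by apply: lt_le_trans Mk _; rewrite lerDr running_min_sum_ge0.
move=> j /andP[aj _]; apply: (running_min_const (b := j.+1)); last by rewrite aj /=.
by move=> m /andP[am _]; apply: ua.
Qed.

Lemma running_min_next_record a : psi a = u a -> (exists2 m, (a < m)%N & u m < psi a) ->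
  exists2 b, psi b = u b & S a + c / 2 ^+ d <= S b.
Proof.
move=> rec_a [m0 am0 um0].
have ex_drop : exists m, (a < m)%N && (u m < psi a) by exists m0; rewrite am0 um0.
case: (ex_minnP ex_drop) => b /andP[ab ub] b_min.
have psi_const j : (a <= j < b)%N -> psi j = psi a.
  apply: running_min_const => m /andP[am mb]; rewrite leNgt; apply/negP => um.
  by have := b_min m; rewrite am um leqNgt mb => /(_ isT).
have rec_b : psi b = u b.
  case: b ab ub psi_const {b_min} => [//|b] ab ub psi_const /=.
  rewrite psi_const; first exact/min_idPr/ltW.
  by rewrite -ltnS ab /=.
exists b => //; rewrite (running_min_sum_const (ltnW ab) psi_const) lerD2l.
rewrite ler_pdivrMr ?exprn_gt0 //; apply: le_trans (drop_separated ab _) _.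
  by rewrite -rec_a.
rewrite -mulrA -exprMn ler_wpM2l //; apply: lerXn2r; rewrite ?nnegrE.
- by rewrite addr_ge0 ?ltW.
- by rewrite mulr_ge0 ?ltW // running_min_gt0.
- by rewrite -rec_a; lra.
Qed.

Lemma running_min_pow_sum_unbounded M : exists N, M < S N.
Proof.
have [[a ua]|no_flat] := pselect (exists a, forall m, (a < m)%N -> psi a <= u m).
  exact: running_min_eventually_const_sum_unbounded ua M.
have drop a : exists2 m, (a < m)%N & u m < psi a.
  apply: contrapT => no_drop; apply: no_flat; exists a => m am.
  by rewrite leNgt; apply/negP => um; apply: no_drop; exists m.
have records k : exists2 a, psi a = u a & k%:R * (c / 2 ^+ d) <= S a.
  elim: k => [|k [a rec_a Sa]]; first by exists 0%N; rewrite // mul0r big_geq.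
  have [b rec_b Sb] := running_min_next_record rec_a (drop a).
  by exists b => //; rewrite -natr1 mulrDl mul1r; apply: le_trans Sb; rewrite lerD2r.
have [k Mk] := exists_natmul_gt M (divr_gt0 c_gt0 (exprn_gt0 d (ltr0Sn R 1))).
by have [a _ Sa] := records k; exists a; apply: lt_le_trans Sa.
Qed.

End RunningMinPowSum.

Lemma Bad_notin_piPi (R : realType) (d : nat) (x : 'I_d -> R) :
  (0 < d)%N -> Bad x -> ~ piPi x.
Proof.
move=> d_gt0 bad [[x' y] Pi_xy /= x'x]; subst x'.
pose D n := distZd (fun i => n%:R * x i + y i).
have [c c_gt0 sepD] := Bad_separated y bad.
have [n0 D_gt0] := separated_eventually_gt0 c_gt0 d_gt0 (fun n => distZd_ge0 _) sepD.
pose u m := D (maxn n0 m); pose psi := running_min u.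
have u_gt0 m : 0 < u m by apply/D_gt0/leq_maxl.
have drop_sep := separated_maxn_drop (n0 := n0) (fun n => distZd_ge0 _) sepD.
have psi_ge0 n : 0 <= psi n by exact/ltW/running_min_gt0.
have psi_in_D : Dset d psi.
  split; [by move=> n _ | split; first by move=> m n _; apply: running_min_nonincr].
  move=> M.
  have [N MN] := running_min_pow_sum_unbounded c_gt0 u_gt0 drop_sep (M + psi 0 ^+ d).
  have SN : \sum_(0 <= j < N) psi j ^+ d <= \sum_(0 <= j < N.+1) psi j ^+ d.
    by rewrite big_nat_recr //= lerDl exprn_ge0.
  by exists N.+1; move: SN; rewrite [X in _ <= X]big_ltn //; lra.
have [n [n0n]] := Pi_xy psi psi_in_D n0.
rewrite ltNge => /negP; apply; apply: le_trans (running_min_le _ _) _.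
by rewrite /u (maxn_idPr (ltnW n0n)).
Qed.

(* The partial sums are squeezed between the nondecreasing S k - 2 e k and the
   nonincreasing S k + 2 e k; the supremum of the former is the sum. *)
Lemma halving_dominated_sum (R : realType) (t e : nat -> R) :
  (forall j, `|t j| <= e j) -> (forall j, e j.+1 <= e j / 2) ->
  exists s, forall k, `|s - \sum_(j < k) t j| <= 2 * e k.
Proof.
move=> te eS; pose lo k := \sum_(j < k) t j - 2 * e k.
pose hi k := \sum_(j < k) t j + 2 * e k.
have step k : lo k <= lo k.+1 /\ hi k.+1 <= hi k.
  rewrite /lo /hi big_ord_recr /=; have := te k; have := eS k.
  by rewrite ler_norml => ? /andP[? ?]; split; lra.
have lo_up : {homo lo : m n / (m <= n)%N >-> m <= n}.
  apply: homo_leq => [//|y x z|k]; [exact: le_trans | by case: (step k)].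
have hi_down : {homo hi : m n / (m <= n)%N >-> n <= m}.
  apply: homo_leq => [//|y x z xy yz|k]; [exact: le_trans yz xy | by case: (step k)].
have lo_hi m n : lo m <= hi n.
  apply: le_trans (lo_up _ _ (leq_maxl m n)) (le_trans _ (hi_down _ _ (leq_maxr m n))).
  by rewrite lerD2l; have := le_trans (normr_ge0 _) (te (maxn m n)); lra.
exists (sup (range lo)) => k.
have lo_ne0 : range lo !=set0 by exists (lo 0%N), 0%N.
have lo_ub : ubound (range lo) (hi k) by move=> _ [m _ <-]; apply: lo_hi.
have lo_le : lo k <= sup (range lo).
  by apply: sup_upper_bound; [split; last exists (hi k) | exists k].
have le_hi : sup (range lo) <= hi k by apply: ge_sup.
by move: lo_le le_hi; rewrite /lo /hi ler_norml => ? ?; apply/andP; split; lra.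
Qed.

Lemma pow_sum_bounded (R : realType) (d : nat) (psi : nat -> R) (ns : nat -> nat)
    (b : nat -> R) (K : nat) :
  (forall n, (0 < n)%N -> 0 <= psi n) ->
  (forall m n, (0 < m)%N -> (m <= n)%N -> psi n <= psi m) ->
  (forall k, (ns k < ns k.+1)%N) -> (0 < ns 0)%N ->
  (forall k, (K < ns k)%N -> psi (ns k) <= b k) ->
  (forall k, (ns k.+1)%:R * b k ^+ d <= 2 ^- k) ->
  exists M, forall N, \sum_(1 <= j < N) psi j ^+ d <= M.
Proof.
move=> psi_ge0 psi_noninc ns_up ns0_gt0 psi_b ns_b.
pose T N := \sum_(1 <= j < N) psi j ^+ d.
have T_up : {homo T : m n / (m <= n)%N >-> m <= n}.
  apply: homo_leq => [//|y x z|[|N]]; first exact: le_trans.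
    by rewrite /T !big_geq.
  by rewrite /T [X in _ <= X]big_nat_recr //= lerDl exprn_ge0 // psi_ge0.
have ns_gt k : (k < ns k)%N by elim: k => // k IH; apply: leq_ltn_trans IH (ns_up k).
have block k : (K <= k)%N -> T (ns k.+1) <= T (ns k) + 2 ^- k.
  move=> Kk; have ns_gt0 : (0 < ns k)%N by apply: leq_ltn_trans (ns_gt k).
  have psi_nsk : psi (ns k) <= b k by apply/psi_b/(leq_ltn_trans Kk).
  have b_ge0 : 0 <= b k by apply: le_trans psi_nsk; apply: psi_ge0.
  rewrite /T (@big_cat_nat _ _ _ (ns k) 1 (ns k.+1)) ?(ltnW (ns_up k)) //= lerD2l.
  have psi_block : \sum_(ns k <= j < ns k.+1) psi j ^+ d <= \sum_(ns k <= j < ns k.+1) b k ^+ d.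
    apply: ler_sum_nat => j /andP[kj _]; apply: lerXn2r; rewrite ?nnegrE ?psi_ge0 //.
      exact: leq_trans kj.
    by apply: le_trans psi_nsk; apply: psi_noninc.
  apply: le_trans psi_block (le_trans _ (ns_b k)).
  by rewrite sumr_const_nat mulr_natl; apply/ler_wpMn2l/leq_subr/exprn_ge0.
have telescope l : T (ns (K + l)%N) + 2 * 2 ^- (K + l)%N <= T (ns K) + 2 * 2 ^- K.
  elim: l => [|l IH]; first by rewrite addn0.
  rewrite addnS; apply: le_trans IH; have := block _ (leq_addr l K).
  have : 2 * 2 ^- (K + l)%N.+1 = 2 ^- (K + l)%N :> R.
    by rewrite exprS invfM mulrA divff ?mul1r ?pnatr_eq0.
  lra.
exists (T (ns K) + 2 * 2 ^- K) => N.
apply: le_trans (T_up _ _ (ltnW (leq_ltn_trans (leq_addl K N) (ns_gt _)))) _.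
have := telescope N; have : 0 <= 2 * 2 ^- (K + N)%N :> R by rewrite mulr_ge0 ?invr_ge0 ?exprn_ge0.
lra.
Qed.

Section NotBad.
Variables (R : realType) (d : nat) (x : 'I_d -> R).
Hypotheses (d_gt0 : (0 < d)%N) (not_bad : ~ Bad x).
Local Notation eta q := (distZd (nscale q x)).

Lemma notBad_small e : 0 < e -> exists2 q, (0 < q)%N & q%:R * eta q ^+ d < e.
Proof.
move=> e_gt0; apply: contrapT => no_q; apply: not_bad; exists e; split => // n n_gt0.
by rewrite leNgt; apply/negP => small; apply: no_q; exists n.
Qed.

Lemma notBad_step n k q : (0 < q)%N -> exists2 q', (0 < q')%N &
  eta q' <= eta q / 2 /\ (n + q')%:R * (2 * eta q') ^+ d <= 2 ^- k.
Proof.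
move=> q_gt0; have := distZd_ge0 (nscale q x); rewrite le_eqVlt => /orP[/eqP eta0|eta_gt0].
  exists q => //; rewrite -eta0 mul0r mulr0 expr0n gtn_eqF // mulr0.
  by split => //; rewrite invr_ge0 exprn_ge0.
pose e := Num.min ((eta q / 2) ^+ d) (2 ^- k / (n.+1%:R * 2 ^+ d)).
have e_gt0 : 0 < e by rewrite lt_min !(exprn_gt0, divr_gt0, mulr_gt0, invr_gt0) ?ltr0Sn.
have [q' q'_gt0 small] := notBad_small e_gt0.
have eta_ge0 : 0 <= eta q' ^+ d by rewrite exprn_ge0 ?distZd_ge0.
have eta_le : eta q' ^+ d <= q'%:R * eta q' ^+ d by rewrite ler_peMl // ler1n.
exists q' => //; split.
  rewrite -(ler_pXn2r d_gt0) ?nnegrE ?distZd_ge0 ?divr_ge0 ?(ltW eta_gt0) //.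
  by apply: le_trans (ltW (le_lt_trans eta_le small)) _; rewrite ge_min lexx.
have e_le : e * (n.+1%:R * 2 ^+ d) <= 2 ^- k.
  by rewrite -ler_pdivlMr ?mulr_gt0 ?exprn_gt0 // ge_min lexx orbT.
apply: le_trans e_le; rewrite exprMn natrD -addn1 natrD.
have : n%:R * eta q' ^+ d <= n%:R * e by apply/ler_wpM2l/ltW/(le_lt_trans eta_le).
have : (0 : R) < 2 ^+ d by rewrite exprn_gt0.
nra.
Qed.

Lemma notBad_sequence : exists q : nat -> nat, [/\ forall k, (0 < q k)%N,
  forall k, eta (q k.+1) <= eta (q k) / 2 &
  forall k, (\sum_(j < k.+2) q j)%:R * (2 * eta (q k.+1)) ^+ d <= 2 ^- k].
Proof.
have /choice[next next_spec] : forall s : nat * nat * nat, exists q', (0 < s.2)%N ->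
    [/\ (0 < q')%N, eta q' <= eta s.2 / 2 & (s.1.1 + q')%:R * (2 * eta q') ^+ d <= 2 ^- s.1.2].
  move=> [[n k] q]; case: (posnP q) => [->|q_gt0]; first by exists 0%N.
  by have [q' ? [? ?]] := notBad_step n k q_gt0; exists q'.
pose f k (p : nat * nat) := ((p.1 + next (p.1, k, p.2))%N, next (p.1, k, p.2)).
pose s k := iteri k f (1, 1)%N.
have s_gt0 k : (0 < (s k).2)%N.
  by elim: k => // k IH; have [] := next_spec ((s k).1, k, (s k).2) IH.
have s_sum k : (s k).1 = (\sum_(j < k.+1) (s j).2)%N.
  by elim: k => [|k IH]; rewrite ?big_ord1 // big_ord_recr /= -IH.
exists (fun k => (s k).2); split => // k;
  have [_ half small] := next_spec ((s k).1, k, (s k).2) (s_gt0 k); first exact: half.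
by rewrite -s_sum.
Qed.

Lemma notBad_in_piPi : piPi x.
Proof.
have [q [q_gt0 eta_half eta_small]] := notBad_sequence.
pose n k := (\sum_(j < k.+1) q j)%N.
pose r j i := nearest_int ((q j)%:R * x i).
have /choice[s s_spec] : forall i, exists s, forall k,
    `|s - \sum_(j < k) ((q j)%:R * x i - (r j i)%:~R)| <= 2 * eta (q k).
  move=> i; pose t j := (q j)%:R * x i - (r j i)%:~R.
  apply: (@halving_dominated_sum _ t (fun k => eta (q k))) => [j|]; last exact: eta_half.
  by rewrite /t -distZE; apply: (distZ_le_distZd (nscale _ x)).
have near_y k : distZd (fun i => (n k)%:R * x i + - s i) <= 2 * eta (q k.+1).
  apply: distZd_le => [|i]; first by rewrite mulr_ge0 ?distZd_ge0.
  apply: le_trans (distZ_le_dist _ (\sum_(j < k.+1) r j i)) _.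
  have -> : (n k)%:R * x i + - s i - (\sum_(j < k.+1) r j i)%:~R =
      - (s i - \sum_(j < k.+1) ((q j)%:R * x i - (r j i)%:~R)).
    by rewrite sumrB -mulr_suml -natr_sum -rmorph_sum /=; ring.
  by rewrite normrN s_spec.
exists (x, fun i => - s i) => // psi [psi_ge0 [psi_noninc psi_unbdd]] N.
apply: contrapT => far.
have psi_le m : (N < m)%N -> psi m <= distZd (fun i => m%:R * x i + - s i).
  by move=> Nm; rewrite leNgt; apply/negP => lt; apply: far; exists m.
have n_up k : (n k < n k.+1)%N by have := q_gt0 k.+1; rewrite /n (big_ord_recr k.+1) /=; lia.
have n0_gt0 : (0 < n 0)%N by rewrite /n big_ord1.
have [M bdd] := pow_sum_bounded psi_ge0 psi_noninc n_up n0_gt0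
  (fun k Nk => le_trans (psi_le _ Nk) (near_y k)) eta_small.
have [N' MN'] := psi_unbdd M.
by have := bdd N'; rewrite leNgt MN'.
Qed.

End NotBad.

Theorem theorem1 (R : realType) (d : nat) (hd : (0 < d)%N) :
  @WA R d = @piPi R d /\ @Bad R d = ~` @piPi R d.
Proof.
have WA_piPi : @WA R d = @piPi R d.
  apply/seteqP; split => x; first exact: notBad_in_piPi.
  by move=> Pi_x bad; apply: Bad_notin_piPi hd bad Pi_x.
by split => //; rewrite -WA_piPi /WA setCK.
Qed.
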